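(* Let $B_1,\dots,B_n$ be independent real-valued service times with finite means $\mu_i$, each with a distribution symmetric around its mean, and put $X_i=B_i-\mu_i$. Fix a sequence $\tau\in\mathsf S_n$ and use the mean-based schedule. Then for each $k\in\{1,\dots,n-1\}$, $$\mathbb EW_{k+1}\le\mathbb E\bigl(X_{\tau(1)}+\cdots+X_{\tau(k)}\bigr)^++\mathbb E\bigl(X_{\tau(1)}+\cdots+X_{\tau(k-1)}\bigr)^+,$$ with an empty sum equal to $0$.
   Context: Under sequence $\tau$ ($\tau(i)$ the patient in slot $i$) and the mean-based schedule (interarrival time after patient $j$ equal to $\mu_j$), the waiting times are $W_1=0$, $W_{i+1}=(W_i+X_{\tau(i)})^+$ with $a^+=\max\{0,a\}$. *)

From HB Require Import structures.
From mathcomp Require Import all_boot all_order all_algebra all_fingroup.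
From mathcomp Require Import all_classical all_reals all_analysis.
Set Implicit Arguments. Unset Strict Implicit. Unset Printing Implicit Defensive.
Import Order.TTheory GRing.Theory Num.Theory.
Local Open Scope classical_set_scope.
Local Open Scope ring_scope.

Definition mutually_independent {R : realType} {d : measure_display}
  {T : measurableType d} (P : probability T R) (n : nat)
  (B : 'I_n -> T -> R) : Prop :=
  forall (J : {set 'I_n}) (A : 'I_n -> set R),
    (forall j, j \in J -> measurable (A j)) ->
    P (\bigcap_(j in [set j | j \in J]) (B j @^-1` A j)) =
    (\prod_(j in J) P (B j @^-1` A j))%E.

Definition symmetric_around {R : realType} {d : measure_display}
  {T : measurableType d} (P : probability T R) (B : T -> R) (m : R) : Prop :=
  forall A : set R, measurable A ->
    P [set w | B w - m \in A] = P [set w | m - B w \in A].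

(* Lindley recursion: W_1 = 0, W_{i+1} = (W_i + x_i)^+ ; [wait xs] is the
   waiting time after processing the increments xs in order. *)
Definition wait {R : realType} (xs : seq R) : R :=
  foldl (fun w x => Num.max 0 (w + x)) 0 xs.

Definition pos_part {R : realType} (x : R) : R := Num.max 0 x.

From HB Require Import structures.
From mathcomp Require Import all_boot all_order all_algebra all_fingroup.
From mathcomp Require Import all_classical all_reals all_analysis.
From mathcomp Require Import measurable_realfun lra.
Import Order.TTheory GRing.Theory Num.Theory.
Local Open Scope classical_set_scope.
Local Open Scope ring_scope.

(* Write Y = (X_tau(1), ..., X_tau(n)).  Independence and symmetry make the law
   of Y invariant under changing the signs of any of its coordinates (it is
   enough to check this on measurable rectangles), so E F(Y) is the average of
   E F(eps Y) over the 2^n sign patterns eps.  It therefore suffices to prove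
   the inequality for every fixed real sequence after averaging over sign
   patterns.  Along the Lindley recursion, for nondecreasing phi the sign
   average of phi(W) is at most that of phi(|S|), S the partial sum.  Applied
   to phi = (. +- b)^+ this bounds W_(k+1) = (W_k +- b)^+ on average by
     (|S| + b)^+ + (|S| - b)^+ = (S + b)^+ + (S - b)^+ + 2 (-S)^+,
   where the last term has the same sign average as 2 S^+. *)

Section SignSums.
Context {V : zmodType} {R : numDomainType}.
Implicit Types (l : seq V) (F G : seq V -> R).

Fixpoint signsum l F : R :=
  if l is x :: l' then
    signsum l' (fun s => F (x :: s)) + signsum l' (fun s => F (- x :: s))
  else F [::].

Lemma eq_signsum l F G : (forall s, size s = size l -> F s = G s) ->
  signsum l F = signsum l G.
Proof.
elim: l F G => [|x l IH] F G eqFG /=; first exact: eqFG.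
by congr (_ + _); apply: IH => s hs; apply: eqFG; rewrite /= hs.
Qed.

Lemma signsum_le l F G : (forall s, size s = size l -> F s <= G s) ->
  signsum l F <= signsum l G.
Proof.
elim: l F G => [|x l IH] F G leFG /=; first exact: leFG.
by apply: lerD; apply: IH => s hs; apply: leFG; rewrite /= hs.
Qed.

Lemma signsumD l F G :
  signsum l (fun s => F s + G s) = signsum l F + signsum l G.
Proof.
elim: l F G => [|x l IH] F G //=.
by rewrite (IH (fun s => F (x :: s))) (IH (fun s => F (- x :: s))) addrACA.
Qed.

Lemma signsum_cst l c : signsum l (fun _ => c) = 2 ^+ size l * c.
Proof.
elim: l => [|x l IH] /=; first by rewrite mul1r.
by rewrite IH exprS -mulrA mulr2n mulrDl !mul1r.
Qed.

Lemma signsum_ge0 l F : (forall s, 0 <= F s) -> 0 <= signsum l F.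
Proof.
move=> F_ge0; rewrite -(mulr0 (2 ^+ size l)) -signsum_cst.
exact: signsum_le.
Qed.

Lemma signsum_rcons l x F : signsum (rcons l x) F =
  signsum l (fun s => F (rcons s x)) + signsum l (fun s => F (rcons s (- x))).
Proof.
elim: l F => [|y l IH] F //=.
by rewrite (IH (fun s => F (y :: s))) (IH (fun s => F (- y :: s))) addrACA.
Qed.

Lemma signsumN l F : signsum l (fun s => F (map -%R s)) = signsum l F.
Proof.
elim: l F => [|x l IH] F //=.
by rewrite (IH (fun s => F (- x :: s))) opprK (IH (fun s => F (x :: s))) addrC.
Qed.

Lemma signsum_take l k F : (k <= size l)%N ->
  signsum l (fun s => F (take k s)) = 2 ^+ (size l - k) * signsum (take k l) F.
Proof.
elim: l k F => [|x l IH] k F /=.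
  by rewrite leqn0 => /eqP -> /=; rewrite mul1r.
case: k => [|k] lek /=.
  by rewrite !signsum_cst subn0 exprS -mulrA mulr2n mulrDl mul1r.
by rewrite (IH k (fun s => F (x :: s))) // (IH k (fun s => F (- x :: s))) // mulrDr.
Qed.

Fixpoint flip_signs (e : seq bool) l : seq V :=
  match e, l with
  | b :: e', x :: l' => (if b then - x else x) :: flip_signs e' l'
  | _, _ => [::]
  end.

Lemma size_flip_signs e l : size e = size l -> size (flip_signs e l) = size l.
Proof. by elim: e l => [|b e IH] [|x l] //= [/IH ->]. Qed.

Lemma nth_flip_signs e l i : size e = size l ->
  nth 0 (flip_signs e l) i = if nth false e i then - nth 0 l i else nth 0 l i.
Proof.
elim: e l i => [|b e IH] [|x l] i //=; first by rewrite !nth_nil.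
by case=> size_e; case: i => [|i] //=; exact: IH.
Qed.

Fixpoint allsigns (m : nat) : seq (seq bool) :=
  if m is m'.+1 then
    [seq false :: e | e <- allsigns m'] ++ [seq true :: e | e <- allsigns m']
  else [:: [::]].

Lemma size_allsigns m : size (allsigns m) = (2 ^ m)%N.
Proof. by elim: m => //= m IH; rewrite size_cat !size_map IH expnS mul2n addnn. Qed.

Lemma allsigns_size m e : e \in allsigns m -> size e = m.
Proof.
elim: m e => [|m IH] e /=; first by rewrite inE => /eqP ->.
by rewrite mem_cat => /orP [] /mapP [e' /IH <- ->].
Qed.

Lemma signsum_allsigns l F :
  signsum l F = \sum_(e <- allsigns (size l)) F (flip_signs e l).
Proof.
elim: l F => [|x l IH] F /=; first by rewrite big_seq1.
by rewrite big_cat !big_map (IH (fun s => F (x :: s))) (IH (fun s => F (- x :: s))).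
Qed.

End SignSums.

Section WaitingTimes.
Variable R : realType.
Implicit Types (s l : seq R) (x y b S : R).

Lemma pos_part_ge0 x : 0 <= pos_part x.
Proof. by rewrite le_max lexx. Qed.

Lemma pos_partE x : pos_part x = x + pos_part (- x).
Proof.
rewrite /pos_part; have [x_ge0|x_lt0] := leP 0 x.
  by rewrite (max_idPl _) ?addr0 // oppr_le0.
by rewrite (max_idPr _) ?subrr // oppr_ge0 ltW.
Qed.

Lemma pos_part_addr_homo b : {homo (fun y => pos_part (y + b)) : x y / x <= y}.
Proof. by move=> x y lexy; rewrite /pos_part ge_max le_max lexx le_max lerD2r lexy orbT. Qed.

Lemma wait_rcons s b : wait (rcons s b) = pos_part (wait s + b).
Proof. by rewrite /wait foldl_rcons. Qed.

Lemma wait_ge0 s : 0 <= wait s.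
Proof. by case/lastP: s => [|s b] //; rewrite wait_rcons pos_part_ge0. Qed.

Lemma le_pos_part_abs_shift (phi : R -> R) : {homo phi : x y / x <= y} ->
  forall S b, phi (pos_part (`|S| + b)) + phi (pos_part (`|S| - b)) <=
              phi `|S + b| + phi `|S - b|.
Proof.
move=> phi_homo S b; have le_abs x : pos_part x <= `|x|.
  by rewrite ge_max normr_ge0 ler_norm.
have [S_ge0|S_lt0] := leP 0 S.
  by rewrite ger0_norm //; apply: lerD; apply/phi_homo/le_abs.
rewrite ltr0_norm // addrC -[`|S + b|]normrN -[`|S - b|]normrN !opprD opprK.
by apply: lerD; apply/phi_homo/le_abs.
Qed.

Lemma pos_part_abs_shift S b :
  pos_part (`|S| + b) + pos_part (`|S| - b) =
  pos_part (S + b) + pos_part (S - b) + 2 * pos_part (- S).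
Proof.
have [S_ge0|S_lt0] := leP 0 S.
  have -> : pos_part (- S) = 0 by apply/max_idPl; rewrite oppr_le0.
  by rewrite ger0_norm // mulr0 addr0.
have -> : pos_part (- S) = - S by apply/max_idPr; rewrite oppr_ge0 ltW.
rewrite ltr0_norm // (pos_partE (- S + b)) (pos_partE (- S - b)) !opprD !opprK.
lra.
Qed.

Lemma signsum_wait_le_abs l (phi : R -> R) : {homo phi : x y / x <= y} ->
  signsum l (fun s => phi (wait s)) <= signsum l (fun s => phi `|\sum_(x <- s) x|).
Proof.
elim/last_ind: l phi => [|l b IH] phi phi_homo.
  by rewrite /= /wait big_nil normr0.
have step c : signsum l (fun s => phi (wait (rcons s c))) <=
    signsum l (fun s => phi (pos_part (`|\sum_(x <- s) x| + c))).
  under eq_signsum => s _ do rewrite wait_rcons.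
  by apply: (IH (fun y => phi (pos_part (y + c)))) => x y lexy;
    apply/phi_homo/pos_part_addr_homo.
rewrite !signsum_rcons; apply: le_trans (lerD (step b) (step (- b))) _.
rewrite -!signsumD; apply: signsum_le => s _.
by rewrite !big_rcons /=; exact: le_pos_part_abs_shift.
Qed.

Lemma signsum_wait_rcons_le l b :
  signsum (rcons l b) wait <=
  signsum (rcons l b) (fun s => pos_part (\sum_(x <- s) x)) +
  signsum (rcons l b) (fun s => pos_part (\sum_(x <- take (size l) s) x)).
Proof.
have step c : signsum l (fun s => wait (rcons s c)) <=
    signsum l (fun s => pos_part (`|\sum_(x <- s) x| + c)).
  under eq_signsum => s _ do rewrite wait_rcons.
  exact: signsum_wait_le_abs (pos_part_addr_homo c).
have reflect_sum : signsum l (fun s => 2 * pos_part (- \sum_(x <- s) x)) =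
    signsum l (fun s => 2 * pos_part (\sum_(x <- s) x)).
  by rewrite -[RHS]signsumN; apply: eq_signsum => s _; rewrite big_map sumrN.
rewrite !signsum_rcons; apply: le_trans (lerD (step b) (step (- b))) _.
rewrite -!signsumD.
under [X in X <= _]eq_signsum => s _ do rewrite pos_part_abs_shift.
rewrite [X in X <= _]signsumD reflect_sum -[X in X <= _]signsumD.
apply: signsum_le => s hs; rewrite -!cats1 -hs !take_size_cat // !big_cat !big_seq1 /=.
by rewrite mulr2n mulrDl mul1r.
Qed.

Lemma signsum_wait_take_le (z : seq R) k : (0 < k <= size z)%N ->
  signsum z (fun s => wait (take k s)) <=
  signsum z (fun s => pos_part (\sum_(x <- take k s) x)) +
  signsum z (fun s => pos_part (\sum_(x <- take k.-1 s) x)).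
Proof.
case/andP=> k_gt0 k_le.
under [X in _ <= _ + X]eq_signsum => s _ do rewrite -(take_takel s (leq_pred k)).
rewrite (signsum_take _ _ wait k_le).
rewrite (signsum_take _ _ (fun s => pos_part (\sum_(x <- s) x)) k_le).
rewrite (signsum_take _ _ (fun s => pos_part (\sum_(x <- take k.-1 s) x)) k_le).
rewrite -mulrDr ler_wpM2l ?exprn_ge0 //.
have: size (take k z) = k by rewrite size_takel.
case/lastP: (take k z) => [|l b]; first by move=> k0; rewrite -k0 in k_gt0.
by rewrite size_rcons => <-; exact: signsum_wait_rcons_le.
Qed.

End WaitingTimes.

Section TupleRectangles.
Context {d : measure_display} {U : measurableType d} {n : nat}.

Definition tuple_rect (A : 'I_n -> set U) : set (n.-tuple U) :=
  [set t | forall i, A i (tnth t i)].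

Definition tuple_rects : set (set (n.-tuple U)) :=
  [set S | exists2 A, (forall i, measurable (A i)) & S = tuple_rect A].

Lemma measurable_tuple_rect A : (forall i, measurable (A i)) ->
  measurable (tuple_rect A).
Proof.
move=> mA; have -> : tuple_rect A = \bigcap_(i in [set: 'I_n]) ((fun t => tnth t i) @^-1` A i).
  by apply/seteqP; split => t /= tA i; [move=> _|]; exact: tA.
apply: fin_bigcap_measurable; first exact: finite_finset.
by move=> i _; rewrite -[X in measurable X]setTI; exact: measurable_tnth.
Qed.

(* The tuple sigma-algebra is generated by the coordinate preimages, which are
   rectangles. *)
Lemma measurable_tuple_rects : measurable = <<s tuple_rects >>.
Proof.
apply/seteqP; split; last first.
  apply: smallest_sub; first exact: sigma_algebra_measurable.
  by move=> _ [A mA ->]; exact: measurable_tuple_rect.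
move=> S mS; apply: (smallest_sub (smallest_sigma_algebra setT tuple_rects) _ mS).
elim/big_ind: _ => //; first by move=> F1 F2 F1S F2S X [/F1S|/F2S].
move=> i _ _ [C mC <-]; apply: sub_sigma_algebra.
exists (fun j => if j == i then C else setT); first by move=> j; case: ifP.
apply/seteqP; split => t /=; first by move=> [_ Ct] j; case: eqP => [->|].
by move=> Ct; split => //; have := Ct i; rewrite eqxx.
Qed.

Lemma setI_closed_tuple_rects : setI_closed tuple_rects.
Proof.
move=> _ _ [A1 mA1 ->] [A2 mA2 ->].
exists (fun i => A1 i `&` A2 i); first by move=> i; exact: measurableI.
by apply/seteqP; split => t /= => [[tA1 tA2] i|tA]; [split|split => i; case: (tA i)].
Qed.

Lemma tuple_rects_setT : tuple_rects setT.
Proof. by exists (fun _ => setT) => //; apply/seteqP; split. Qed.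

End TupleRectangles.

Section MeasurableFoldl.
Context {R : realType} {d : measure_display} {T : measurableType d}.
Variable f : R -> R -> R.
Hypothesis measurable_f : forall g h : T -> R, measurable_fun setT g ->
  measurable_fun setT h -> measurable_fun setT (fun x => f (g x) (h x)).

Lemma measurable_foldl_take m (g : T -> m.-tuple R) (h : T -> R) j :
  measurable_fun setT h -> measurable_fun setT g ->
  measurable_fun setT (fun x => foldl f (h x) (take j (g x))).
Proof.
elim: m g h j => [|m IH] g h [|j] mh mg.
- by under eq_fun do rewrite take0.
- by under eq_fun do rewrite (size0nil (size_tuple (g _))).
- by under eq_fun do rewrite take0.
under eq_fun => x do rewrite (tuple_eta (g x)) /=.
apply: (IH (fun x => [tuple of behead (g x)])).
  by apply: measurable_f => //; exact: (measurableT_comp (measurable_tnth _) mg).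
exact: (measurableT_comp (@measurable_behead _ R m) mg).
Qed.

End MeasurableFoldl.

Section MeasurableWaiting.
Context {R : realType} {n : nat}.

Lemma measurable_wait_take k :
  measurable_fun setT (fun t : n.-tuple R => wait (take k t)).
Proof.
apply: measurable_foldl_take => // g h mg mh.
by apply: measurable_maxr => //; exact: measurable_funD.
Qed.

Lemma measurable_pos_part_sum_take k :
  measurable_fun setT (fun t : n.-tuple R => pos_part (\sum_(x <- take k t) x)).
Proof.
apply: measurable_maxr => //; under eq_fun do rewrite -foldl_idx.
by apply: measurable_foldl_take => // g h mg mh; exact: measurable_funD.
Qed.

End MeasurableWaiting.

Section FlipTuple.
Context {R : realType} {n : nat}.

Definition flip_tuple (e : seq bool) (t : n.-tuple R) : n.-tuple R :=
  [tuple if nth false e i then - tnth t i else tnth t i | i < n].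

Lemma val_flip_tuple e t : size e = n -> val (flip_tuple e t) = flip_signs e t.
Proof.
rewrite -[n in _ = n](size_tuple t) => size_e; apply: (@eq_from_nth _ 0).
  by rewrite size_flip_signs // !size_tuple.
move=> i; rewrite size_tuple => ltin.
by rewrite nth_flip_signs // -!(tnth_nth 0 _ (Ordinal ltin)) /flip_tuple tnth_mktuple.
Qed.

Lemma measurable_flip_tuple e : measurable_fun setT (flip_tuple e).
Proof.
apply/measurable_fun_tnthP => i.
rewrite (_ : _ \o _ = fun t => if nth false e i then - tnth t i else tnth t i).
  by case: nth; [apply: measurableT_comp => //|]; exact: measurable_tnth.
by apply/funext => t; rewrite /= /flip_tuple tnth_mktuple.
Qed.

Lemma flip_tuple_preimage_rect e A :
  flip_tuple e @^-1` tuple_rect A =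
  tuple_rect (fun i => if nth false e i then -%R @^-1` A i else A i).
Proof.
by apply/seteqP; split => t /= tA i; have := tA i; rewrite tnth_mktuple; case: nth.
Qed.

End FlipTuple.

Section SignInvariance.
Context {R : realType} {d : measure_display} {T : measurableType d}.
Context (P : probability T R) {n : nat} (B : 'I_n -> T -> R) (mu : 'I_n -> R).
Context (tau : 'S_n).
Hypothesis measurable_B : forall i, measurable_fun setT (B i).
Hypothesis indep_B : mutually_independent P B.
Hypothesis symmetric_B : forall i, symmetric_around P (B i) (mu i).

Definition centered_perm (w : T) : n.-tuple R :=
  [tuple B (tau i) w - mu (tau i) | i < n].

Lemma measurable_centered_perm : measurable_fun setT centered_perm.
Proof.
apply/measurable_fun_tnthP => i.
rewrite (_ : _ \o _ = fun w => B (tau i) w - mu (tau i)).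
  exact: measurable_funB.
by apply/funext => w; rewrite /= tnth_mktuple.
Qed.

Lemma prob_centered_perm_rect A : (forall i, measurable (A i)) ->
  P (centered_perm @^-1` tuple_rect A) =
  (\prod_(j in [set: 'I_n]%SET) P (B j @^-1` [set x | A (tau^-1 j)%g (x - mu j)%R]))%E.
Proof.
move=> mA; rewrite -indep_B; last first.
  move=> j _; rewrite -[X in measurable X]setTI.
  by apply: measurable_funB => //; exact: measurable_id.
congr (P _); apply/seteqP; split => w /= Aw.
  by move=> j _; have := Aw (tau^-1 j)%g; rewrite tnth_mktuple permKV.
by move=> i; rewrite tnth_mktuple; have := Aw (tau i); rewrite /= inE permK; exact.
Qed.

Lemma prob_flip_centered_perm_rect e A : (forall i, measurable (A i)) ->
  P ((flip_tuple e \o centered_perm) @^-1` tuple_rect A) =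
  P (centered_perm @^-1` tuple_rect A).
Proof.
move=> mA; rewrite comp_preimage flip_tuple_preimage_rect !prob_centered_perm_rect //;
  last by move=> i; case: nth => //; rewrite -[X in measurable X]setTI; exact: measurable_funN.
apply: eq_bigr => j _; case: nth => //.
have := symmetric_B j _ (mA (tau^-1 j)%g); rewrite /preimage /= => sym_j.
transitivity (P [set w | mu j - B j w \in A (tau^-1 j)%g]).
  by congr (P _); apply/seteqP; split => w /=; rewrite inE opprB.
by rewrite -sym_j; congr (P _); apply/seteqP; split => w /=; rewrite inE.
Qed.

Lemma flip_centered_perm_law e A : measurable A ->
  P ((flip_tuple e \o centered_perm) @^-1` A) = P (centered_perm @^-1` A).
Proof.
apply: (measure_unique tuple_rects (fun _ => setT) measurable_tuple_rects
  setI_closed_tuple_rects (fun _ => tuple_rects_setT) _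
  (pushforward P (flip_tuple e \o centered_perm)) (pushforward P centered_perm)).
- by rewrite bigcup_const.
- exact: measurableT_comp (measurable_flip_tuple e) measurable_centered_perm.
- exact: measurable_centered_perm.
- by move=> ? ? _ [A' mA' ->]; exact: prob_flip_centered_perm_rect.
- move=> ? _; change (P ((flip_tuple e \o centered_perm) @^-1` setT) < +oo)%E.
  by rewrite preimage_setT probability_setT ltry.
Qed.

Lemma integral_flip_centered_perm e (G : n.-tuple R -> R) :
  measurable_fun setT G -> (forall t, 0 <= G t) ->
  (\int[P]_w (G (flip_tuple e (centered_perm w)))%:E =
   \int[P]_w (G (centered_perm w))%:E)%E.
Proof.
move=> mG G_ge0.
have integral_pushforward (Y : T -> n.-tuple R) (mY : measurable_fun setT Y) :
    (\int[P]_w (G (Y w))%:E = \int[pushforward P Y]_t (G t)%:E)%E.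
  rewrite ge0_integral_pushforward //; first exact/measurable_EFinP.
  by move=> t _; rewrite lee_fin.
have mY := measurable_centered_perm.
have mflipY := measurableT_comp (measurable_flip_tuple e) mY.
rewrite !integral_pushforward //.
apply: eq_measure_integral => // A mA _.
exact: flip_centered_perm_law.
Qed.

Lemma signsum_centered_permE (F : seq R -> R) w :
  ((signsum (centered_perm w) F)%:E =
   \sum_(e <- allsigns n) (F (flip_tuple e (centered_perm w)))%:E)%E.
Proof.
rewrite signsum_allsigns size_tuple -sumEFin big_seq [RHS]big_seq.
by apply: eq_bigr => e /allsigns_size size_e; rewrite val_flip_tuple.
Qed.

Section NonnegativeFunctional.
Variable F : seq R -> R.
Hypothesis measurable_F : measurable_fun setT (fun t : n.-tuple R => F t).
Hypothesis F_ge0 : forall s, 0 <= F s.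

Let measurable_F_flip e :
  measurable_fun setT (fun w => (F (flip_tuple e (centered_perm w)))%:E).
Proof.
apply/measurable_EFinP; apply: measurableT_comp measurable_F _.
exact: measurableT_comp (measurable_flip_tuple e) measurable_centered_perm.
Qed.

Lemma measurable_signsum_centered_perm :
  measurable_fun setT (fun w => (signsum (centered_perm w) F)%:E).
Proof.
under eq_fun do rewrite signsum_centered_permE.
exact: emeasurable_sum.
Qed.

Lemma integral_signsum_centered_perm :
  (\int[P]_w (signsum (centered_perm w) F)%:E =
   (2 ^ n)%:R%:E * \int[P]_w (F (centered_perm w))%:E)%E.
Proof.
under eq_integral do rewrite signsum_centered_permE.
rewrite ge0_integral_sum //; last by move=> e w _; rewrite lee_fin.
under eq_bigr do rewrite (integral_flip_centered_perm _ _ measurable_F (fun t => F_ge0 t)).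
by rewrite big_const_seq count_predT size_allsigns iter_addr_0 mule_natl.
Qed.

End NonnegativeFunctional.

Lemma le_integral_signsum (F G : seq R -> R) :
  measurable_fun setT (fun t : n.-tuple R => F t) ->
  measurable_fun setT (fun t : n.-tuple R => G t) ->
  (forall s, 0 <= F s) -> (forall s, 0 <= G s) ->
  (forall t : n.-tuple R, signsum t F <= signsum t G) ->
  (\int[P]_w (F (centered_perm w))%:E <= \int[P]_w (G (centered_perm w))%:E)%E.
Proof.
move=> mF mG F_ge0 G_ge0 leFG.
have two_n_gt0 : (0 < (2 ^ n)%:R%:E :> \bar R)%E by rewrite lte_fin ltr0n expn_gt0.
rewrite -(lee_pmul2l _ two_n_gt0) // -!integral_signsum_centered_perm //.
apply: ge0_le_integral => //.
- by move=> w _; rewrite lee_fin; exact: signsum_ge0.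
- exact: measurable_signsum_centered_perm.
- exact: measurable_signsum_centered_perm.
- by move=> w _; rewrite lee_fin.
Qed.

End SignInvariance.

Theorem lemma3p3 (R : realType) (d : measure_display) (T : measurableType d)
  (P : probability T R) (n : nat) (B : 'I_n -> T -> R) (mu : 'I_n -> R)
  (tau : 'S_n)
  (hmeas : forall i, measurable_fun setT (B i))
  (hint : forall i, P.-integrable setT (EFin \o B i))
  (hmean : forall i, ('E_P[B i] = (mu i)%:E)%E)
  (hindep : mutually_independent P B)
  (hsym : forall i, symmetric_around P (B i) (mu i))
  (k : nat) (hk1 : (1 <= k)%N) (hk2 : (k <= n - 1)%N) :
  let X := fun (i : 'I_n) (w : T) => B i w - mu i in
  let Xs := fun w : T => [seq X (tau i) w | i <- enum 'I_n] in
  (\int[P]_w (wait (take k (Xs w)))%:E <=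
     \int[P]_w (pos_part (\sum_(x <- take k (Xs w)) x))%:E +
     \int[P]_w (pos_part (\sum_(x <- take k.-1 (Xs w)) x))%:E)%E.
Proof.
pose Y := centered_perm B mu tau.
pose S j (s : seq R) := pos_part (\sum_(x <- take j s) x).
suff : (\int[P]_w (wait (take k (Y w)))%:E <=
  \int[P]_w (S k (Y w))%:E + \int[P]_w (S k.-1 (Y w))%:E)%E by [].
have mY : measurable_fun setT Y := measurable_centered_perm B mu tau hmeas.
have mS j := @measurable_pos_part_sum_take R n j.
have S_ge0 j s : 0 <= S j s by exact: pos_part_ge0.
rewrite -ge0_integralD //; first last.
- by apply/measurable_EFinP; exact: measurableT_comp (mS _) mY.
- by move=> w _; rewrite lee_fin.
- by apply/measurable_EFinP; exact: measurableT_comp (mS _) mY.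
- by move=> w _; rewrite lee_fin.
under eq_integral do rewrite -EFinD.
apply: (le_integral_signsum P B mu tau hmeas hindep hsym
  (fun s => wait (take k s)) (fun s => S k s + S k.-1 s)).
- exact: measurable_wait_take.
- exact: measurable_funD (mS k) (mS k.-1).
- by move=> s; exact: wait_ge0.
- by move=> s; exact: addr_ge0.
move=> t; rewrite signsumD; apply: signsum_wait_take_le.
by rewrite hk1 size_tuple (leq_trans hk2) ?leq_subr.
Qed.
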